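(* Let $\mathcal R(P_n)=u_1,\ldots,u_m$. (1) For $n\geq2$: if $x_n\mid u_i$ for some $i$, then $x_n\mid u_j$ for all $j\geq i$. (2) For $n\geq3$: if $x_{n-2}\mid u_i$ for some $i$, then $x_{n-2}\mid u_j$ for all $j\geq i$. (3) For $n\geq4$: if $\mathcal R(P_{n-2})=v_1,\ldots,v_k$ and $\mathcal R(P_{n-1})=w_1,\ldots,w_\ell$, then $\mathcal R(P_n)=x_{n-1}v_1,\ldots,x_{n-1}v_k,x_nw_1,\ldots,x_nw_\alpha$ for some $\alpha<\ell$.
   Context: For $m\geq 1$, $P_m$ is the path graph on vertices $x_1,\ldots,x_m$ with edges $\{x_i,x_{i+1}\}$. The rooted list $\mathcal R(P_m)$ (a list of the minimal monomial generators of the cover ideal of $P_m$) is defined recursively: $\mathcal R(P_1)$ empty; $\mathcal R(P_2)=x_1,x_2$; $\mathcal R(P_3)=x_2,x_1x_3$; $\mathcal R(P_4)=x_1x_3,x_2x_3,x_2x_4$; for $m\geq5$, if $\mathcal R(P_{m-2})=u_1,\ldots,u_r$ and $\mathcal R(P_{m-3})=v_1,\ldots,v_s$, then $\mathcal R(P_m)=x_{m-1}u_1,\ldots,x_{m-1}u_r,x_mx_{m-2}v_1,\ldots,x_mx_{m-2}v_s$. *)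

From mathcomp Require Import all_boot.
From mathcomp Require Import finmap multiset.
Set Implicit Arguments. Unset Strict Implicit. Unset Printing Implicit Defensive.
Local Open Scope fset_scope.
Local Open Scope mset_scope.

(* Monomials in the variables x_1, x_2, ... are finite multisets of variable
   indices: the monomial x_1^{a_1} x_2^{a_2} ... is the multiset containing
   i with multiplicity a_i. *)
Definition monomial := {mset nat}.
Definition var (i : nat) : monomial := [mset i].
Definition mmul (u w : monomial) : monomial := u `+` w.
Definition mdvd (u w : monomial) : bool := u `<=` w.

(* The rooted list R(P_m) of the path graph P_m (R(P_0) := [::] by convention,
   P_0 is never used). *)
Fixpoint rooted (m : nat) : seq monomial :=
  match m with
  | 0 | 1 => [::]
  | 2 => [:: var 1; var 2]
  | 3 => [:: var 2; mmul (var 1) (var 3)]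
  | 4 => [:: mmul (var 1) (var 3); mmul (var 2) (var 3); mmul (var 2) (var 4)]
  | ((((k.+2 as k2).+1) as k3).+2) =>
      [seq mmul (var k.+4) u | u <- rooted k3] ++
      [seq mmul (mmul (var k.+4.+1) (var k.+3)) v | v <- rooted k2]
  end.

From mathcomp Require Import all_boot.
From mathcomp Require Import finmap multiset.
From mathcomp Require Import zify.

Set Implicit Arguments. Unset Strict Implicit. Unset Printing Implicit Defensive.

(* Every variable of a monomial of R(P_m) is at most x_m.  In
   R(P_n) = x_{n-1} R(P_{n-2}), x_n x_{n-2} R(P_{n-3}) the variable x_n
   therefore occurs exactly in the second block, and x_{n-2} occurs in the
   second block and, inside the first block, exactly where it occurs in
   R(P_{n-2}), which by the first statement is a final segment.  Finally the
   first block of R(P_{n-1}) is x_{n-2} R(P_{n-3}), so the second block of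
   R(P_n) is x_n times a proper prefix of R(P_{n-1}). *)

Section SortedImplb.

Variables (T : Type) (P : pred T).

Lemma relpre_implb_trans : transitive (relpre P implb).
Proof. by move=> y x z /=; case: (P x); case: (P y). Qed.

Lemma sorted_implb_predC s : all (predC P) s -> sorted (relpre P implb) s.
Proof.
elim: s => //= x s IHs /andP[/negbTE Px Ps].
rewrite path_min_sorted ?IHs //.
by apply: sub_all (all_predT s) => y _ /=; rewrite Px.
Qed.

Lemma sorted_implb_all s : all P s -> sorted (relpre P implb) s.
Proof.
elim: s => //= x s IHs /andP[_ Ps].
rewrite path_min_sorted ?IHs //.
by apply: sub_all Ps => y /= ->; rewrite implybT.
Qed.

Lemma sorted_implb_catr s1 s2 :
  sorted (relpre P implb) s1 -> all P s2 -> sorted (relpre P implb) (s1 ++ s2).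
Proof.
move=> s1_sorted Ps2; have trans := relpre_implb_trans.
rewrite sorted_pairwise // pairwise_cat -!sorted_pairwise //.
rewrite s1_sorted sorted_implb_all // !andbT.
apply: sub_all (all_predT s1) => x _; apply: sub_all Ps2 => y /= ->.
exact: implybT.
Qed.

Lemma sorted_implb_nth x0 s i j : sorted (relpre P implb) s ->
  i <= j -> j < size s -> P (nth x0 s i) -> P (nth x0 s j).
Proof.
move=> s_sorted le_ij lt_js; apply/implyP.
apply: (sorted_leq_nth relpre_implb_trans _ x0 s_sorted) => //=.
- by move=> x /=; rewrite implybb.
- by rewrite inE (leq_ltn_trans le_ij).
Qed.

End SortedImplb.

Lemma mdvd_var i (u : monomial) : mdvd (var i) u = (i \in u).
Proof. exact: msub1set. Qed.

Lemma in_var i j : (i \in var j) = (i == j).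
Proof. exact: in_mset1. Qed.

Lemma in_mmul i (u w : monomial) : (i \in mmul u w) = (i \in u) || (i \in w).
Proof. exact: in_msetD. Qed.

Lemma mmulA (u v w : monomial) : mmul u (mmul v w) = mmul (mmul u v) w.
Proof. exact: msetDA. Qed.

Lemma mmulC (u w : monomial) : mmul u w = mmul w u.
Proof. exact: msetDC. Qed.

Lemma rooted_recE n : 4 < n -> rooted n =
  [seq mmul (var n.-1) u | u <- rooted (n - 2)] ++
  [seq mmul (mmul (var n) (var (n - 2))) v | v <- rooted (n - 3)].
Proof. by case: n => [|[|[|[|[|k]]]]]. Qed.

Lemma rooted_support_leq m (u : monomial) i : u \in rooted m -> i \in u -> i <= m.
Proof.
elim/ltn_ind: m u => m IHm u.
have [le_m4 | lt_4m] := leqP m 4.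
  case: m le_m4 {IHm} => [|[|[|[|[|//]]]]] _ // u_in;
    by repeat case/predU1P: u_in => [-> | u_in] //; rewrite ?in_mmul !in_var; lia.
rewrite rooted_recE // mem_cat => /orP[] /mapP[v v_in ->];
  rewrite !in_mmul !in_var => /orP[|i_in_v]; try lia.
- by have := IHm (m - 2) _ v v_in i_in_v; lia.
- by have := IHm (m - 3) _ v v_in i_in_v; lia.
Qed.

Lemma size_rooted_gt0 m : 1 < m -> 0 < size (rooted m).
Proof.
elim/ltn_ind: m => m IHm lt_1m.
have [le_m4 | lt_4m] := leqP m 4.
  by case: m le_m4 lt_1m {IHm} => [|[|[|[|[|]]]]].
by rewrite rooted_recE // size_cat size_map ltn_addr // IHm //; lia.
Qed.

Lemma rooted_sorted_mem_last n : 1 < n ->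
  sorted (relpre (fun u => n \in u) implb) (rooted n).
Proof.
move=> lt_1n; have [le_n4 | lt_4n] := leqP n 4.
  case: n le_n4 lt_1n => [|[|[|[|[|//]]]]] _ _ //=;
    by rewrite ?in_mmul !in_var.
rewrite rooted_recE // sorted_implb_catr //.
  apply/sorted_implb_predC/allP => _ /mapP[u u_in ->] /=.
  rewrite in_mmul in_var; apply/norP; split; first by apply/eqP; lia.
  by apply/negP => /(rooted_support_leq u_in); lia.
by apply/allP => _ /mapP[v _ ->]; rewrite !in_mmul in_var eqxx.
Qed.

Lemma rooted_sorted_mem_antepenult n : 2 < n ->
  sorted (relpre (fun u => (n - 2) \in u) implb) (rooted n).
Proof.
move=> lt_2n; have [le_n4 | lt_4n] := leqP n 4.
  case: n le_n4 lt_2n => [|[|[|[|[|//]]]]] _ _ //=;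
    by rewrite ?in_mmul !in_var.
rewrite rooted_recE // sorted_implb_catr //.
  rewrite sorted_map; apply: sub_sorted (rooted_sorted_mem_last _) => //; last lia.
  move=> u w /=; rewrite !in_mmul !in_var.
  by have -> : (n - 2 == n.-1) = false by lia.
by apply/allP => _ /mapP[v _ ->]; rewrite !in_mmul !in_var eqxx orbT.
Qed.

Lemma take_rooted m : 3 < m ->
  take (size (rooted (m - 2))) (rooted m) =
  [seq mmul (var m.-1) u | u <- rooted (m - 2)].
Proof.
case: m => [|[|[|[|[|k]]]]] // _; first by rewrite /= !(mmulC (var 3)).
by rewrite (rooted_recE (n := k.+4.+1)) // take_size_cat ?size_map.
Qed.

Lemma size_rooted_lt m : 3 < m -> size (rooted (m - 2)) < size (rooted m).
Proof.
case: m => [|[|[|[|[|k]]]]] // _.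
rewrite (rooted_recE (n := k.+4.+1)) // size_cat !size_map.
by rewrite -addn1 leq_add2l size_rooted_gt0.
Qed.

Lemma rooted_cat_take n : 3 < n ->
  exists alpha : nat, alpha < size (rooted n.-1) /\
    rooted n = [seq mmul (var n.-1) v | v <- rooted (n - 2)] ++
               [seq mmul (var n) w | w <- take alpha (rooted n.-1)].
Proof.
case: n => [|[|[|[|[|k]]]]] // _.
  by exists 1; split => //=; rewrite !(mmulC (var 3)) (mmulC (var 4)).
exists (size (rooted k.+2)); split; first exact: (size_rooted_lt (m := k.+4)).
rewrite (take_rooted (m := k.+4)) // (rooted_recE (n := k.+4.+1)) // -map_comp.
by congr (_ ++ _); apply: eq_map => v /=; rewrite mmulA.
Qed.

Theorem lemma3p7 :
  (* (1) *)
  (forall n i j : nat, 2 <= n -> i <= j -> j < size (rooted n) ->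
     mdvd (var n) (nth mset0 (rooted n) i) ->
     mdvd (var n) (nth mset0 (rooted n) j)) /\
  (* (2) *)
  (forall n i j : nat, 3 <= n -> i <= j -> j < size (rooted n) ->
     mdvd (var (n - 2)) (nth mset0 (rooted n) i) ->
     mdvd (var (n - 2)) (nth mset0 (rooted n) j)) /\
  (* (3) *)
  (forall n : nat, 4 <= n ->
     exists alpha : nat, alpha < size (rooted n.-1) /\
       rooted n = [seq mmul (var n.-1) v | v <- rooted (n - 2)] ++
                  [seq mmul (var n) w | w <- take alpha (rooted n.-1)]).
Proof.
split; [|split].
- move=> n i j le_2n; rewrite !mdvd_var.
  exact: sorted_implb_nth (rooted_sorted_mem_last le_2n).
- move=> n i j le_3n; rewrite !mdvd_var.
  exact: sorted_implb_nth (rooted_sorted_mem_antepenult le_3n).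
- exact: rooted_cat_take.
Qed.
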